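(* Let $(\Omega,\Sigma,\mu)$ be a $\sigma$-finite atomless measure space and let $0<\alpha\le\infty$. Suppose that $u,v\in L_0(\mu)$ with $u,v\ge 0$ and $u\wedge v=0$ (i.e. $\min(u,v)=0$ a.e.), and suppose $f\in L_0(0,\infty)$, $f\ge 0$, is such that $$\int_0^t u^*(s)\,ds\le\int_0^t f^*(s)\,ds,\qquad \int_0^t v^*(s)\,ds\le\int_0^t f^*(s)\,ds,\qquad 0\le t<\alpha .$$ Then $$\int_0^t (u+v)^*(s)\,ds\le \int_0^t (D_2f^* )(s)\,ds,\qquad 0\le t<\alpha,$$ where $(D_2 g)(t)=g(t/2)$ for $t\ge 0$.
   Context: $L_0(\mu)$ denotes the space of (classes of) $\mu$-measurable real functions. For $f\in L_0(\mu)$, the distribution function is $d_{|f|}(s)=\mu(\{x:|f(x)|>s\})$, $s\ge0$, and the decreasing rearrangement is $f^*(t)=\inf\{s\ge 0: d_{|f|}(s)\le t\}$, $t\ge 0$. The space $(0,\infty)$ carries Lebesgue measure. *)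

From HB Require Import structures.
From mathcomp Require Import all_boot all_order all_algebra.
From mathcomp Require Import all_classical all_reals all_analysis.
Set Implicit Arguments. Unset Strict Implicit. Unset Printing Implicit Defensive.
Import Order.TTheory GRing.Theory Num.Theory.
Local Open Scope classical_set_scope.
Local Open Scope ring_scope.
Local Open Scope ereal_scope.

Definition distribution d (T : measurableType d) (R : realType)
  (mu : {measure set T -> \bar R}) (D : set T) (f : T -> R) (s : R) : \bar R :=
  mu (D `&` [set x | (s < `|f x|)%R]).

Definition rearrangement d (T : measurableType d) (R : realType)
  (mu : {measure set T -> \bar R}) (D : set T) (f : T -> R) (t : R) : \bar R :=
  ereal_inf [set s%:E | s in [set s : R | (0 <= s)%R /\ distribution mu D f s <= t%:E]].

Definition atomless d (T : measurableType d) (R : realType)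
  (mu : {measure set T -> \bar R}) : Prop :=
  forall A, measurable A -> 0 < mu A ->
    exists2 B, measurable B /\ B `<=` A & 0 < mu B < mu A.

From Pilot Require Import Defs.
From HB Require Import structures.
From mathcomp Require Import all_boot all_order all_algebra.
From mathcomp Require Import all_classical all_reals all_analysis.
From mathcomp Require Import measurable_realfun lra.
Import Order.TTheory GRing.Theory Num.Theory.
Local Open Scope classical_set_scope.
Local Open Scope ring_scope.
Local Open Scope ereal_scope.

(* For a nonnegative nonincreasing [phi] on [[0, oo[] let [L phi sg] be the right end
   [sup {s >= 0 | sg < phi s}] of its superlevel set at height [sg]; the layer-cake
   formula gives [int_0^t phi = int_0^oo min(t, L phi sg) dsg].  Write [l_g] for
   [L g^*].  Since [u] and [v] have disjoint supports, [d_(u+v) <= d_u + d_v], hence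
   [(u+v)^* (a+b) <= max(u^* a, v^* b)] and [l_(u+v) <= l_u + l_v].  A one-dimensional
   Helly argument yields a single [t1] in [[0, t]] with
   [min(t, l_u + l_v) <= min(t1, l_u) + min(t - t1, l_v)] at every height, so
   [int_0^t (u+v)^* <= int_0^t1 u^* + int_0^(t-t1) v^*], which the hypotheses bound by
   [int_0^t1 f^* + int_0^(t-t1) f^*].  Finally [L (D_2 f^* ) = 2 l_f] and
   [min(t1, l) + min(t2, l) <= min(t1 + t2, 2 l)] give
   [int_0^t1 f^* + int_0^t2 f^* <= int_0^(t1+t2) D_2 f^*]. *)

Section real_split.
Local Open Scope ring_scope.

Lemma common_point_of_intervals (R : realType) (I : Type) (i0 : I) (a b : I -> R) :
  (forall i j, a i <= b j) -> exists x, forall i, a i <= x <= b i.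
Proof.
move=> ab; have supa : has_sup (range a).
  by split; [exists (a i0), i0|exists (b i0) => _ [i _ <-]].
exists (sup (range a)) => i; apply/andP; split; first exact: sup_upper_bound.
by apply: ge_sup; [exists (a i0), i0|move=> _ [j _ <-]].
Qed.

Lemma minD_le_split (R : realType) (t t1 p q : R) :
  0 <= p <= t -> 0 <= q <= t ->
  Num.min p (t - q) <= t1 <= Num.max p (t - q) ->
  Num.min t (p + q) <= Num.min t1 p + Num.min (t - t1) q.
Proof.
move=> /andP[p0 pt] /andP[q0 qt].
by case: (leP p (t - q)) => pq /andP[? ?]; [rewrite !min_r|rewrite !min_l]; lra.
Qed.

Lemma nonincreasing_minD_split (R : realType) (t : R) (p q : R -> R) :
  (forall s, 0 <= p s <= t) -> (forall s, 0 <= q s <= t) ->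
  nonincreasing_fun p -> nonincreasing_fun q ->
  exists2 t1, 0 <= t1 <= t & forall s,
    Num.min t (p s + q s) <= Num.min t1 (p s) + Num.min (t - t1) (q s).
Proof.
move=> p0t q0t pni qni.
(* [t1] must lie between [p s] and [t - q s] for every [s], and monotonicity makes these
   intervals pairwise intersect. *)
have [|t1 ht1] := @common_point_of_intervals R R 0 (fun s => Num.min (p s) (t - q s))
    (fun s => Num.max (p s) (t - q s)).
  move=> s s'; rewrite le_max !ge_min; have [ss'|s's] := leP s s'.
    by rewrite lerD2l lerN2 qni ?orbT.
  by rewrite (pni _ _ (ltW s's)).
exists t1; last by move=> s; apply: minD_le_split.
have /andP[p0 pt] := p0t 0; have /andP[q0 qt] := q0t 0; have /andP[a0 b0] := ht1 0.
apply/andP; split; [apply: le_trans a0|apply: le_trans b0 _].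
  by rewrite le_min p0 subr_ge0.
by rewrite ge_max pt gerBl.
Qed.

End real_split.

Lemma nonincreasing_emeasurable (R : realType) (phi : R -> \bar R) :
  nonincreasing_fun phi -> measurable_fun [set: R] phi.
Proof.
move=> ni; apply: (measurability _ (ErealGenCInfty.measurableE R)) => //.
move=> /= _ [_ [r ->] <-]; apply: measurableI => //.
apply: is_interval_measurable => a b /=; rewrite !in_itv/= !andbT => ha hb c /andP[ac cb].
by rewrite /= in_itv/= andbT (le_trans hb)// ni.
Qed.

Section superlevel_end.
Context {R : realType}.
Implicit Types (phi : R -> \bar R) (sg s t : R).

(* The point [0] is always admitted, so the value is [>= 0]; for nonincreasing [phi] the
   set [[s >= 0 | sg < phi s]] is an initial segment of [[0, oo[] ending here. *)
Definition superlevel_end phi sg : \bar R :=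
  ereal_sup [set s%:E | s in [set s | (0 <= s)%R /\ (s = 0%R \/ sg%:E < phi s)]].

Lemma superlevel_end_ge0 phi sg : 0 <= superlevel_end phi sg.
Proof. by apply: ereal_sup_ubound; exists 0%R => //; split => //; left. Qed.

Lemma superlevel_end_nonincreasing phi : nonincreasing_fun (superlevel_end phi).
Proof.
move=> sg1 sg2 sg12; apply: ereal_sup_le => _ [s [s0 hs] <-]; exists s => //.
split => //; case: hs => [->|hs]; [by left|right].
by apply: le_lt_trans hs; rewrite lee_fin.
Qed.

Lemma superlevel_end_ub phi sg s :
  (0 <= s)%R -> sg%:E < phi s -> s%:E <= superlevel_end phi sg.
Proof. by move=> s0 h; apply: ereal_sup_ubound; exists s => //; split => //; right. Qed.

Lemma lt_superlevel_end phi sg s : nonincreasing_fun phi ->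
  (0 <= s)%R -> s%:E < superlevel_end phi sg -> sg%:E < phi s.
Proof.
move=> ni s0 /ereal_sup_gt[_ [y [y0 [->|hy]] <-]]; rewrite lte_fin => sy.
  by move: sy; rewrite ltNge s0.
by apply: lt_le_trans hy _; apply: ni; exact: ltW.
Qed.

Lemma superlevel_end_dilate phi c sg : (0 < c)%R ->
  superlevel_end (fun s => phi (s / c)%R) sg = c%:E * superlevel_end phi sg.
Proof.
move=> c0; have c_neq0 : c != 0%R by rewrite gt_eqF.
rewrite -ereal_sup_pZl//; congr ereal_sup; apply/seteqP; split.
  move=> _ [s [s0 hs] <-]; exists (s / c)%:E; last by rewrite -EFinM mulrC divfK.
  exists (s / c)%R => //; split; first exact: divr_ge0 s0 (ltW c0).
  by case: hs => [->|]; [left; rewrite mul0r|right].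
move=> _ [_ [s [s0 hs] <-] <-]; exists (c * s)%R; last by rewrite EFinM.
split; first exact: mulr_ge0 (ltW c0) s0.
by case: hs => [->|]; [left; rewrite mulr0|right; rewrite [(c * s)%R]mulrC mulfK].
Qed.

End superlevel_end.

Section layer_cake.
Context {R : realType}.
Local Notation leb := (@lebesgue_measure R).

Lemma lebesgue_measure_below (x : \bar R) : 0 <= x ->
  leb ([set` `[0%R, +oo[] `&` [set y | y%:E < x]) = x.
Proof.
case: x => [x| |] // x0.
- rewrite (_ : _ `&` _ = [set` `[0%R, x[]); last first.
    apply/seteqP; split => y; rewrite /= !in_itv/= andbT lte_fin.
      by case=> -> ->.
    by case/andP.
  rewrite lebesgue_measure_itv/= lte_fin; move: x0; rewrite lee_fin.
  by case: ltgtP => // [x0 _|<- _]; rewrite ?sube0 ?subrr.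
- rewrite (_ : _ `&` _ = [set` `[0%R, +oo[]); last first.
    by apply/seteqP; split => y //= y0; [case: y0|split; rewrite ?ltry].
  by rewrite lebesgue_measure_itv/= ltry sube0.
Qed.

Lemma layer_cake (phi : R -> \bar R) (t : R) : measurable_fun [set: R] phi ->
  (forall s, 0 <= phi s) ->
  \int[leb]_(s in `[0%R, t]) phi s =
  \int[leb]_(sg in `[0%R, +oo[) leb ([set` `[0%R, t]] `&` [set s | sg%:E < phi s]).
Proof.
move=> mphi phi0.
pose E := [set` `[0%R, t]] `*` [set` `[0%R, +oo[] `&` [set p : R * R | p.2%:E < phi p.1].
have mE : measurable E.
  apply: measurableI; first exact: measurableX.
  by rewrite -[X in measurable X]setTI; apply: measurable_lte => //; apply: measurableT_comp.
have := indic_fubini_tonelli leb leb mE.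
rewrite indic_fubini_tonelli_FE; last exact: mE.
rewrite indic_fubini_tonelli_GE; last exact: mE.
move=> FG; rewrite [LHS]integral_mkcond [RHS]integral_mkcond.
have -> : phi \_ [set` `[0%R, t]] = leb \o xsection E.
  apply/funext => s; rewrite patchE /= xsectionI.
  case: ifPn => st; last by rewrite (notin_xsectionX _ st) set0I measure0.
  rewrite (in_xsectionX _ st) xsectionE.
  exact: (esym (lebesgue_measure_below _ (phi0 s))).
have -> : (fun sg => leb ([set` `[0%R, t]] `&` [set s | sg%:E < phi s]))
    \_ [set` `[0%R, +oo[] = leb \o ysection E.
  apply/funext => sg; rewrite patchE /= ysectionI.
  case: ifPn => sg0; last by rewrite (notin_ysectionX _ sg0) set0I measure0.
  by rewrite (in_ysectionX _ sg0) ysectionE.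
exact: FG.
Qed.
End layer_cake.

Section truncation.
Context {R : realType}.
Implicit Types (t : R) (A B : \bar R).

Lemma fine_mineK t A : 0 <= A -> (fine (mine t%:E A))%:E = mine t%:E A.
Proof. by case: A => [x| |] //= _; rewrite ?miney// -EFin_min. Qed.

Lemma fine_mine_itv t A : (0 <= t)%R -> 0 <= A -> (0 <= fine (mine t%:E A) <= t)%R.
Proof.
move=> t0 A0; rewrite -!lee_fin fine_mineK//.
by rewrite le_min lee_fin t0 A0 ge_min lexx.
Qed.

Lemma mine_fine (t1 t : R) A : (t1 <= t)%R -> 0 <= A ->
  mine t1%:E A = (Num.min t1 (fine (mine t%:E A)))%:E.
Proof.
move=> t1t A0; rewrite EFin_min fine_mineK// minA.
by rewrite (min_l (_ : t1%:E <= t%:E)) ?lee_fin.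
Qed.

Lemma mine_fineD t A B : (0 <= t)%R -> 0 <= A -> 0 <= B ->
  mine t%:E (A + B) = (Num.min t (fine (mine t%:E A) + fine (mine t%:E B)))%:E.
Proof.
move=> t0 A0 B0; rewrite EFin_min EFinD !fine_mineK//.
have t_le_2t : t%:E <= t%:E + t%:E by rewrite leeDl ?lee_fin.
case: (leP t%:E A) => tA; case: (leP t%:E B) => tB //.
- by rewrite !min_l// (le_trans tA (leeDl _ B0)).
- by rewrite !min_l// ?leeDl// (le_trans tA (leeDl _ B0)).
- by rewrite !min_l// ?leeDr// (le_trans tB (leeDr _ A0)).
Qed.

Lemma mineD_le_mul2 (t1 t2 : R) (A : \bar R) :
  mine t1%:E A + mine t2%:E A <= mine (t1 + t2)%:E (2%:E * A).
Proof.
case: A => [x| |].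
- rewrite -EFinM -!EFin_min -EFinD lee_fin le_min; apply/andP; split.
    by apply: lerD; rewrite ge_min lexx.
  by rewrite mulr_natl mulr2n; apply: lerD; rewrite ge_min lexx orbT.
- by rewrite mulry gtr0_sg// mul1e !miney.
- by rewrite mulrNy gtr0_sg// mul1e !mineNy.
Qed.

End truncation.

Section superlevel_integral.
Context {R : realType}.
Local Notation leb := (@lebesgue_measure R).
Implicit Types (phi : R -> \bar R) (sg t : R).

Lemma lebesgue_measure_itv0 (b : bool) (m : R) : (0 <= m)%R ->
  leb [set` Interval (BLeft 0%R) (BSide b m)] = m%:E.
Proof.
move=> m0; case: b; rewrite lebesgue_measure_itv/= lte_fin;
  by case: ltgtP m0 => // [m0 _|<- _]; rewrite ?sube0 ?subrr.
Qed.

Lemma lebesgue_measure_superlevel phi t sg : nonincreasing_fun phi -> (0 <= t)%R ->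
  leb ([set` `[0%R, t]] `&` [set s | sg%:E < phi s]) = mine t%:E (superlevel_end phi sg).
Proof.
move=> ni t0; have L0 := superlevel_end_ge0 phi sg.
have mS : measurable ([set` `[0%R, t]] `&` [set s | sg%:E < phi s]).
  apply: measurableI => //; rewrite -[X in measurable X]setTI.
  by apply: emeasurable_fun_o_infty => //; exact: nonincreasing_emeasurable.
rewrite -fine_mineK//; have /andP[m0 mt] := fine_mine_itv _ _ t0 L0.
set m := fine _ in m0 mt *.
have mL : m%:E <= superlevel_end phi sg by rewrite fine_mineK// ge_min lexx orbT.
apply/eqP; rewrite eq_le; apply/andP; split.
- rewrite -(lebesgue_measure_itv0 false _ m0); apply: le_measure; rewrite ?inE//.
  move=> s [/=]; rewrite !in_itv/= => /andP[s0 st] hs; rewrite s0/= -lee_fin.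
  by rewrite fine_mineK// le_min lee_fin st superlevel_end_ub.
- rewrite -(lebesgue_measure_itv0 true _ m0); apply: le_measure; rewrite ?inE//.
  move=> s /=; rewrite in_itv/= => /andP[s0 sm]; split.
    by rewrite /= in_itv/= s0 (le_trans (ltW sm)).
  by apply: lt_superlevel_end => //; apply: lt_le_trans mL; rewrite lte_fin.
Qed.

Lemma measurable_mine_superlevel_end phi t :
  measurable_fun [set: R] (fun sg => mine t%:E (superlevel_end phi sg)).
Proof.
apply: nonincreasing_emeasurable => a b ab /=.
by rewrite le_min !ge_min lexx (superlevel_end_nonincreasing phi _ _ ab) orbT.
Qed.

Lemma mine_superlevel_end_ge0 phi t sg : (0 <= t)%R ->
  0 <= mine t%:E (superlevel_end phi sg).
Proof. by move=> t0; rewrite le_min lee_fin t0 superlevel_end_ge0. Qed.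

Lemma integral_mine_superlevel_endD phi psi t t' : (0 <= t)%R -> (0 <= t')%R ->
  \int[leb]_(sg in `[0%R, +oo[) mine t%:E (superlevel_end phi sg) +
  \int[leb]_(sg in `[0%R, +oo[) mine t'%:E (superlevel_end psi sg) =
  \int[leb]_(sg in `[0%R, +oo[)
    (mine t%:E (superlevel_end phi sg) + mine t'%:E (superlevel_end psi sg)).
Proof.
move=> t0 t'0; rewrite ge0_integralD//.
- by move=> sg _; exact: mine_superlevel_end_ge0.
- apply: measurable_funTS; exact: measurable_mine_superlevel_end.
- by move=> sg _; exact: mine_superlevel_end_ge0.
- apply: measurable_funTS; exact: measurable_mine_superlevel_end.
Qed.

Lemma integral_superlevel_end phi t : nonincreasing_fun phi -> (forall s, 0 <= phi s) ->
  (0 <= t)%R ->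
  \int[leb]_(s in `[0%R, t]) phi s =
  \int[leb]_(sg in `[0%R, +oo[) mine t%:E (superlevel_end phi sg).
Proof.
move=> ni phi0 t0; rewrite layer_cake//; last exact: nonincreasing_emeasurable.
by apply: eq_integral => sg _; rewrite lebesgue_measure_superlevel.
Qed.

End superlevel_integral.

Section superlevel_comparisons.
Context {R : realType}.
Local Notation leb := (@lebesgue_measure R).

Lemma gt_superlevel_end (phi : R -> \bar R) (sg s : R) : (0 <= s)%R ->
  superlevel_end phi sg < s%:E -> phi s <= sg%:E.
Proof.
move=> s0 Ls; rewrite leNgt; apply/negP => /(superlevel_end_ub _ _ _ s0).
by rewrite leNgt Ls.
Qed.

Lemma superlevel_end_le_add (k g h : R -> \bar R) :
  (forall a b, (0 <= a)%R -> (0 <= b)%R -> k (a + b)%R <= maxe (g a) (h b)) ->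
  forall sg, superlevel_end k sg <= superlevel_end g sg + superlevel_end h sg.
Proof.
move=> kgh sg; apply: ge_ereal_sup => _ [s [s0 [->|ks]] <-].
  by rewrite adde_ge0 ?superlevel_end_ge0.
case Eg: (superlevel_end g sg) (superlevel_end_ge0 g sg) => [x| |] // x0;
  case Eh: (superlevel_end h sg) (superlevel_end_ge0 h sg) => [y| |] // y0;
  rewrite ?addye ?addey ?leey //.
rewrite leNgt; apply/negP; move: x0 y0; rewrite !lee_fin lte_fin => x0 y0 sxy.
pose e := ((s - x - y) / 2)%R.
have e0 : (0 < e)%R by rewrite /e; lra.
have ga : g (x + e)%R <= sg%:E.
  by apply: gt_superlevel_end; rewrite ?Eg ?lte_fin; lra.
have hb : h (y + e)%R <= sg%:E.
  by apply: gt_superlevel_end; rewrite ?Eh ?lte_fin; lra.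
have ks' : k s <= sg%:E.
  rewrite -[s](_ : x + e + (y + e) = s)%R; last by rewrite /e; lra.
  by apply: le_trans (kgh _ _ _ _) _; rewrite ?ge_max ?ga ?hb //; lra.
by rewrite leNgt ks in ks'.
Qed.

Lemma integral_le_split (k g h : R -> \bar R) (t : R) :
  nonincreasing_fun k -> nonincreasing_fun g -> nonincreasing_fun h ->
  (forall s, 0 <= k s) -> (forall s, 0 <= g s) -> (forall s, 0 <= h s) ->
  (forall a b, (0 <= a)%R -> (0 <= b)%R -> k (a + b)%R <= maxe (g a) (h b)) ->
  (0 <= t)%R ->
  exists2 t1 : R, (0 <= t1 <= t)%R &
    \int[leb]_(s in `[0%R, t]) k s <=
    \int[leb]_(s in `[0%R, t1]) g s + \int[leb]_(s in `[0%R, (t - t1)%R]) h s.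
Proof.
move=> nik nig nih k0 g0 h0 kgh t0.
pose p sg := fine (mine t%:E (superlevel_end g sg)).
pose q sg := fine (mine t%:E (superlevel_end h sg)).
have trunc_ni phi : nonincreasing_fun (fun sg => fine (mine t%:E (superlevel_end phi sg))).
  move=> a b ab; rewrite -lee_fin !fine_mineK ?superlevel_end_ge0//.
  by rewrite le_min !ge_min lexx (superlevel_end_nonincreasing phi _ _ ab) orbT.
have [t1 /andP[t10 t1t] pq] := @nonincreasing_minD_split R t p q
  (fun sg => fine_mine_itv _ _ t0 (superlevel_end_ge0 g sg))
  (fun sg => fine_mine_itv _ _ t0 (superlevel_end_ge0 h sg)) (trunc_ni g) (trunc_ni h).
exists t1; first by rewrite t10 t1t.
have tt1 : (0 <= t - t1)%R by rewrite subr_ge0.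
rewrite !integral_superlevel_end// integral_mine_superlevel_endD//.
apply: ge0_le_integral => //.
- by move=> sg _; exact: mine_superlevel_end_ge0.
- apply: measurable_funTS; exact: measurable_mine_superlevel_end.
- by apply: emeasurable_funD; apply: measurable_funTS; exact: measurable_mine_superlevel_end.
move=> sg _; have [Lg0 Lh0] := (superlevel_end_ge0 g sg, superlevel_end_ge0 h sg).
apply: (@le_trans _ _ (mine t%:E (superlevel_end g sg + superlevel_end h sg))).
  by rewrite le_min !ge_min lexx (superlevel_end_le_add _ _ _ kgh sg) orbT.
rewrite mine_fineD// (mine_fine t1 t)// (mine_fine (t - t1) t)// ?gerBl//.
by rewrite -EFinD lee_fin pq.
Qed.

Lemma integral_itvD_le_dilate (phi : R -> \bar R) (t1 t2 : R) :
  nonincreasing_fun phi -> (forall s, 0 <= phi s) -> (0 <= t1)%R -> (0 <= t2)%R ->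
  \int[leb]_(s in `[0%R, t1]) phi s + \int[leb]_(s in `[0%R, t2]) phi s <=
  \int[leb]_(s in `[0%R, (t1 + t2)%R]) phi (s / 2)%R.
Proof.
move=> ni phi0 t10 t20.
have psi_ni : nonincreasing_fun (fun s => phi (s / 2)%R).
  by move=> a b ab; apply: ni; rewrite ler_pM2r.
rewrite !integral_superlevel_end ?addr_ge0// integral_mine_superlevel_endD//.
apply: ge0_le_integral => //.
- by move=> sg _; apply: adde_ge0; exact: mine_superlevel_end_ge0.
- by apply: emeasurable_funD; apply: measurable_funTS; exact: measurable_mine_superlevel_end.
- apply: measurable_funTS; exact: measurable_mine_superlevel_end.
by move=> sg _; rewrite superlevel_end_dilate// mineD_le_mul2.
Qed.

End superlevel_comparisons.

Section rearrangement.
Context {d} {T : measurableType d} {R : realType} (mu : {measure set T -> \bar R}).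
Variable D : set T.
Implicit Types (g : T -> R).
Local Notation distribution := (Defs.distribution mu D).
Local Notation rearrangement := (rearrangement mu D).

Lemma rearrangement_ge0 g t : 0 <= rearrangement g t.
Proof. by apply: le_ereal_inf_tmp => _ [s [s0 _] <-]; rewrite lee_fin. Qed.

Lemma rearrangement_nonincreasing g : nonincreasing_fun (rearrangement g).
Proof.
move=> a b ab; apply: ereal_inf_le_tmp => _ [s [s0 hs] <-]; exists s => //.
by split => //; apply: le_trans hs _; rewrite lee_fin.
Qed.

Hypothesis mD : measurable D.

Lemma measurable_norm_superlevel g s : measurable_fun D g ->
  measurable (D `&` [set x | (s < `|g x|)%R]).
Proof.
move=> mg; rewrite -(preimage_itvoy (fun x => `|g x|)%R).
exact: (measurableT_comp (@normr_measurable R setT) mg) mD _ (measurable_itv _).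
Qed.

Lemma distribution_nonincreasing g : measurable_fun D g ->
  nonincreasing_fun (distribution g).
Proof.
move=> mg a b ab; apply: le_measure; rewrite ?inE; try exact: measurable_norm_superlevel.
by move=> x [Dx gx]; split => //=; apply: le_lt_trans gx.
Qed.

Lemma distribution_add_disjoint (u v : T -> R) :
  measurable_fun D u -> measurable_fun D v ->
  {ae mu, forall x, Num.min (u x) (v x) = 0%R} ->
  forall s, distribution (u \+ v)%R s <= distribution u s + distribution v s.
Proof.
move=> mu_ mv [N [mN N0 uvN]] s.
have [mU mV] := (measurable_norm_superlevel u s mu_, measurable_norm_superlevel v s mv).
apply: (@le_trans _ _ (mu ((D `&` [set x | (s < `|u x|)%R]) `|`
    (D `&` [set x | (s < `|v x|)%R]) `|` N))).
  apply: le_measure; rewrite ?inE//.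
  - exact: measurable_norm_superlevel (measurable_funD mu_ mv).
  - by apply: measurableU => //; exact: measurableU.
  move=> x [Dx /= hx]; have [Nx|Nx] := pselect (N x); first by right.
  have : Num.min (u x) (v x) = 0%R by apply: contrapT => uv; exact/Nx/uvN.
  case: (leP (u x) (v x)) => _ uv0; rewrite uv0 ?add0r ?addr0 in hx.
  - by left; right; split.
  - by left; left; split.
by rewrite measureU0//; [exact: measureU2|exact: measurableU].
Qed.

Lemma rearrangement_le_max g g1 g2 (a b : R) :
  measurable_fun D g1 -> measurable_fun D g2 ->
  (forall s, distribution g s <= distribution g1 s + distribution g2 s) ->
  rearrangement g (a + b)%R <= maxe (rearrangement g1 a) (rearrangement g2 b).
Proof.
move=> mg1 mg2 gg12; rewrite leNgt; apply/negP => H.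
have Hu : rearrangement g1 a < rearrangement g (a + b)%R.
  by apply: le_lt_trans H; rewrite le_max lexx.
have Hv : rearrangement g2 b < rearrangement g (a + b)%R.
  by apply: le_lt_trans H; rewrite le_max lexx orbT.
have [_ [s1 [s10 hs1] <-] lt1] := ereal_inf_lt Hu.
have [_ [s2 [s20 hs2] <-] lt2] := ereal_inf_lt Hv.
have : rearrangement g (a + b)%R <= (Num.max s1 s2)%:E.
  apply: ereal_inf_lbound; exists (Num.max s1 s2) => //.
  split; first by rewrite le_max s10.
  apply: le_trans (gg12 _) _; rewrite EFinD; apply: leeD.
  - by apply: le_trans hs1; apply: distribution_nonincreasing => //; rewrite le_max lexx.
  - by apply: le_trans hs2; apply: distribution_nonincreasing => //; rewrite le_max lexx orbT.
by rewrite leNgt; case: (leP s1 s2) => _; rewrite ?lt1 ?lt2.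
Qed.

End rearrangement.

Theorem lemma2p1 (d : measure_display) (T : measurableType d) (R : realType)
  (mu : {measure set T -> \bar R}) (alpha : \bar R)
  (u v : T -> R) (f : R -> R) :
  sigma_finite setT mu -> atomless mu ->
  0 < alpha ->
  measurable_fun setT u -> measurable_fun setT v ->
  {ae mu, forall x, (0 <= u x)%R} -> {ae mu, forall x, (0 <= v x)%R} ->
  {ae mu, forall x, Num.min (u x) (v x) = 0%R} ->
  measurable_fun (`]0%R, +oo[ : set R) f ->
  {ae (@lebesgue_measure R), forall x, x \in `]0%R, +oo[ -> (0 <= f x)%R} ->
  (forall t : R, (0 <= t)%R -> t%:E < alpha ->
     \int[lebesgue_measure]_(s in `[0%R, t]) rearrangement mu setT u s
     <= \int[lebesgue_measure]_(s in `[0%R, t])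
          rearrangement lebesgue_measure (`]0%R, +oo[ : set R) f s) ->
  (forall t : R, (0 <= t)%R -> t%:E < alpha ->
     \int[lebesgue_measure]_(s in `[0%R, t]) rearrangement mu setT v s
     <= \int[lebesgue_measure]_(s in `[0%R, t])
          rearrangement lebesgue_measure (`]0%R, +oo[ : set R) f s) ->
  forall t : R, (0 <= t)%R -> t%:E < alpha ->
     \int[lebesgue_measure]_(s in `[0%R, t]) rearrangement mu setT (u \+ v)%R s
     <= \int[lebesgue_measure]_(s in `[0%R, t])
          rearrangement lebesgue_measure (`]0%R, +oo[ : set R) f (s / 2)%R.
Proof.
move=> _ _ _ mu_ mv _ _ uv0 _ _ Hu Hv t t0 ta.
have uv_max a b : rearrangement mu setT (u \+ v)%R (a + b)%R <=
    maxe (rearrangement mu setT u a) (rearrangement mu setT v b).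
  exact/rearrangement_le_max/distribution_add_disjoint.
have [t1 /andP[t10 t1t] k_split] := integral_le_split _ _ _ _
  (rearrangement_nonincreasing mu setT (u \+ v)%R) (rearrangement_nonincreasing mu setT u)
  (rearrangement_nonincreasing mu setT v) (rearrangement_ge0 mu setT (u \+ v)%R)
  (rearrangement_ge0 mu setT u) (rearrangement_ge0 mu setT v) (fun a b _ _ => uv_max a b) t0.
have tt1 : (0 <= t - t1)%R by rewrite subr_ge0.
apply: (le_trans k_split); apply: le_trans (leeD (Hu t1 t10 _) (Hv (t - t1)%R tt1 _)) _.
- by apply: le_lt_trans ta; rewrite lee_fin.
- by apply: le_lt_trans ta; rewrite lee_fin gerBl.
have := integral_itvD_le_dilate _ _ _
  (rearrangement_nonincreasing lebesgue_measure (`]0%R, +oo[ : set R) f)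
  (rearrangement_ge0 lebesgue_measure (`]0%R, +oo[ : set R) f) t10 tt1.
by rewrite subrKC.
Qed.
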